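(* Let $n\in\mathbb{N}$ and let $K\subset\mathbb{R}^n$ be a strictly convex, $0$-symmetric convex body. Then \[ G(K)\le 2^n\bigl(G(\operatorname{int}K)+1\bigr)-1. \]
   Context: A convex body in $\mathbb{R}^n$ is a compact convex set with nonempty interior; it is $0$-symmetric if $K=-K$, and strictly convex if its boundary contains no nondegenerate line segment. For $S\subset\mathbb{R}^n$, $G(S)=|S\cap\mathbb{Z}^n|$, and $\operatorname{int}K$ denotes the interior of $K$. *)

From mathcomp Require Import ssreflect ssrfun ssrbool eqtype ssrnat seq fintype bigop.
From Stdlib Require Import Reals ZArith List.

Set Implicit Arguments.
Unset Strict Implicit.

Definition vec (n : nat) := 'I_n -> R.

Definition vadd n (x y : vec n) : vec n := fun i => (x i + y i)%R.
Definition vscale n (t : R) (x : vec n) : vec n := fun i => (t * x i)%R.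
Definition vopp n (x : vec n) : vec n := fun i => (- x i)%R.

Definition dist2 n (x y : vec n) : R :=
  \big[Rplus/0%R]_(i < n) ((x i - y i) * (x i - y i))%R.

Definition in_ball n (x : vec n) (eps : R) (y : vec n) : Prop :=
  (dist2 x y < eps * eps)%R.

Definition int_pts n (K : vec n -> Prop) (x : vec n) : Prop :=
  exists eps : R, (0 < eps)%R /\ forall y, in_ball x eps y -> K y.

Definition cl_pts n (K : vec n -> Prop) (x : vec n) : Prop :=
  forall eps : R, (0 < eps)%R -> exists y, K y /\ in_ball x eps y.

Definition boundary n (K : vec n -> Prop) (x : vec n) : Prop :=
  cl_pts K x /\ ~ int_pts K x.

Definition is_closed n (K : vec n -> Prop) : Prop :=
  forall x, cl_pts K x -> K x.

Definition is_bounded n (K : vec n -> Prop) : Prop :=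
  exists M : R, forall x, K x -> (dist2 x (fun _ => 0%R) <= M)%R.

Definition is_convex n (K : vec n -> Prop) : Prop :=
  forall x y (t : R), K x -> K y -> (0 <= t <= 1)%R ->
    K (vadd (vscale t x) (vscale (1 - t) y)).

Definition convex_body n (K : vec n -> Prop) : Prop :=
  is_convex K /\ is_closed K /\ is_bounded K /\ exists x, int_pts K x.

Definition o_symmetric n (K : vec n -> Prop) : Prop :=
  forall x, K x <-> K (vopp x).

Definition strictly_convex n (K : vec n -> Prop) : Prop :=
  forall x y : vec n, x <> y ->
    ~ (forall t : R, (0 <= t <= 1)%R ->
         boundary K (vadd (vscale t x) (vscale (1 - t) y))).

Definition zvec (n : nat) := 'I_n -> Z.
Definition zembed n (z : zvec n) : vec n := fun i => IZR (z i).

(* G(S) = m : the set S ∩ Z^n is finite with exactly m elements *)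
Definition lattice_count n (S : vec n -> Prop) (m : nat) : Prop :=
  exists l : list (zvec n), NoDup l /\ length l = m /\
    forall z : zvec n, In z l <-> S (zembed z).

(* Choose in each parity class p of Z^n mod 2 a lattice point c_p of K, with
   c_0 = 0.  For a lattice point x of K in class p, (x - c_p)/2 is an integer
   point, namely the midpoint of x and -c_p, both in K; by strict convexity it
   is interior unless x = -c_p.  Sending x to (p, (x - c_p)/2), and the points
   x = -c_p <> c_p to (p, None), injects the lattice points of K into
   (Z/2)^n x (interior lattice points + {None}), missing (0, None). *)

From HB Require Import structures.
From mathcomp Require Import ssreflect ssrfun ssrbool eqtype ssrnat seq fintype finfun bigop zify.
From Stdlib Require Import Reals ZArith List Lra Lia ClassicalEpsilon FunctionalExtensionality Classical.

HB.instance Definition _ := Monoid.isComLaw.Build R 0%R Rplus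
  (fun x y z => esym (Rplus_assoc x y z)) Rplus_comm Rplus_0_l.

Set Implicit Arguments.
Local Open Scope R_scope.

Lemma big_Rmult_l n c (F : 'I_n -> R) :
  \big[Rplus/0]_(i < n) (c * F i) = c * \big[Rplus/0]_(i < n) F i.
Proof.
elim: n F => [|n IH] F; first by rewrite !big_ord0 Rmult_0_r.
by rewrite !big_ord_recr /= IH Rmult_plus_distr_l.
Qed.

Lemma big_Rplus_ge_term n (F : 'I_n -> R) j :
  (forall i, 0 <= F i) -> F j <= \big[Rplus/0]_(i < n) F i.
Proof.
move=> F_ge0; rewrite (bigD1 j) //= -{1}(Rplus_0_r (F j)).
apply: Rplus_le_compat_l; apply: (big_ind (fun x => 0 <= x)) => //; [lra | move=> x y; lra].
Qed.

Lemma dist2xx n (x : vec n) : dist2 x x = 0.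
Proof.
rewrite /dist2 (eq_bigr (fun i => 0 * 1)); last by move=> i _; ring.
by rewrite big_Rmult_l Rmult_0_l.
Qed.

Lemma in_ball_center n (x : vec n) eps : 0 < eps -> in_ball x eps x.
Proof. by rewrite /in_ball dist2xx; nra. Qed.

Lemma cl_pts_of n (K : vec n -> Prop) x : K x -> cl_pts K x.
Proof. by move=> Kx eps eps_gt0; exists x; split; last exact: in_ball_center. Qed.

Lemma int_pts_in n (K : vec n -> Prop) x : int_pts K x -> K x.
Proof. by case=> eps [eps_gt0 ballK]; apply/ballK/in_ball_center. Qed.

(* y lies in the ball of radius s*eps around s q + (1-s) a iff its preimage
   under the homothety of centre a and ratio s lies in the ball of radius eps
   around q. *)
Lemma int_pts_convex_comb n (K : vec n -> Prop) q a s :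
  is_convex K -> int_pts K q -> K a -> 0 < s <= 1 ->
  int_pts K (vadd (vscale s q) (vscale (1 - s) a)).
Proof.
move=> Kconv [eps [eps_gt0 ballK]] Ka s01.
exists (s * eps); split=> [|y y_near]; first nra.
pose y' : vec n := fun i => (y i - (1 - s) * a i) / s.
have dist_y' : dist2 q y' = / (s * s) * dist2 (vadd (vscale s q) (vscale (1 - s) a)) y.
  rewrite /dist2 -big_Rmult_l; apply: eq_bigr => i _.
  by rewrite /y' /vadd /vscale; field; lra.
have Ky' : K y'.
  apply: ballK; rewrite /in_ball dist_y'.
  move: y_near; rewrite /in_ball => y_near.
  apply: (Rmult_lt_reg_l (s * s)); first nra.
  by rewrite -Rmult_assoc Rinv_r; nra.
have -> : y = vadd (vscale s y') (vscale (1 - s) a).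
  by apply: functional_extensionality => i; rewrite /vadd /vscale /y'; field; lra.
by apply: Kconv => //; lra.
Qed.

(* Some point of the segment [a, b] is interior; the midpoint is a convex
   combination of that point (with positive weight) and an endpoint. *)
Lemma strictly_convex_midpoint n (K : vec n -> Prop) a b :
  is_convex K -> strictly_convex K -> K a -> K b -> a <> b ->
  int_pts K (vadd (vscale (1/2) a) (vscale (1/2) b)).
Proof.
move=> Kconv Kstrict Ka Kb a_neq_b.
have [t [t01 not_bd]] : exists t, 0 <= t <= 1 /\
    ~ boundary K (vadd (vscale t a) (vscale (1 - t) b)).
  apply: NNPP => all_bd; apply: (Kstrict a b a_neq_b) => t t01.
  by apply: NNPP => not_bd; apply: all_bd; exists t.
have int_t : int_pts K (vadd (vscale t a) (vscale (1 - t) b)).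
  by apply: NNPP => not_int; apply: not_bd; split=> //; apply/cl_pts_of/Kconv.
case: (Rle_lt_dec (1/2) t) => [t_ge|t_lt].
- have -> : vadd (vscale (1/2) a) (vscale (1/2) b) =
      vadd (vscale (1 / (2 * t)) (vadd (vscale t a) (vscale (1 - t) b)))
           (vscale (1 - 1 / (2 * t)) b).
    by apply: functional_extensionality => i; rewrite /vadd /vscale; field; lra.
  apply: int_pts_convex_comb => //; split; first by apply: Rdiv_lt_0_compat; lra.
  by apply: (Rmult_le_reg_l (2 * t)); [lra | field_simplify; lra].
- have -> : vadd (vscale (1/2) a) (vscale (1/2) b) =
      vadd (vscale (1 / (2 * (1 - t))) (vadd (vscale t a) (vscale (1 - t) b)))
           (vscale (1 - 1 / (2 * (1 - t))) a).
    by apply: functional_extensionality => i; rewrite /vadd /vscale; field; lra.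
  apply: int_pts_convex_comb => //; split; first by apply: Rdiv_lt_0_compat; lra.
  by apply: (Rmult_le_reg_l (2 * (1 - t))); [lra | field_simplify; lra].
Qed.

Lemma o_symmetric_int0 n (K : vec n -> Prop) :
  convex_body K -> o_symmetric K -> int_pts K (fun _ => 0).
Proof.
move=> [Kconv [_ [_ [p int_p]]]] Ksym.
have K_p : K (vopp p) by apply: (proj1 (Ksym p)); exact: int_pts_in.
have := @int_pts_convex_comb n K p (vopp p) (1/2) Kconv int_p K_p.
have -> : vadd (vscale (1/2) p) (vscale (1 - 1/2) (vopp p)) = (fun _ => 0).
  by apply: functional_extensionality => i; rewrite /vadd /vscale /vopp; field.
by apply; lra.
Qed.

Definition holds (P : Prop) : bool := if excluded_middle_informative P then true else false.

Lemma holdsP (P : Prop) : reflect P (holds P).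
Proof. by rewrite /holds; case: excluded_middle_informative => p; constructor. Qed.

Lemma length_size T (s : list T) : length s = size s.
Proof. by elim: s => //= x s ->. Qed.

Lemma In_of_mem (T : eqType) (x : T) (s : list T) : x \in s -> List.In x s.
Proof. by elim: s => //= y s IH; rewrite inE => /orP [/eqP ->|/IH]; [left | right]. Qed.

Lemma length_lt_of_inj_remove (A B : Type) (decB : forall a b : B, {a = b} + {a <> b})
    (f : A -> B) (l : list A) (Q : list B) (b0 : B) :
  NoDup l -> (forall x y, In x l -> In y l -> f x = f y -> x = y) ->
  (forall x, In x l -> In (f x) Q /\ f x <> b0) -> In b0 Q ->
  (length l < length Q)%coq_nat.
Proof.
move=> nd_l f_inj f_in b0_in.
have nd_fl : NoDup (List.map f l) by apply: NoDup_map_NoDup_ForallPairs.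
have fl_sub : incl (List.map f l) (remove decB b0 Q).
  move=> _ /in_map_iff [x [<- lx]]; have [fxQ fx_b0] := f_in x lx.
  by apply: in_in_remove.
rewrite -(length_map f l); apply: Nat.le_lt_trans (NoDup_incl_length nd_fl fl_sub) _.
exact: remove_length_lt.
Qed.

Definition zbox n (lo : Z) (k : nat) : list (zvec n) :=
  [seq (fun i => lo + Z.of_nat (f i))%Z | f : {ffun 'I_n -> 'I_k} <- enum {ffun 'I_n -> 'I_k}].

Lemma expn_pow k n : expn k n = (k ^ n)%nat.
Proof. by elim: n => //= n IH; rewrite expnS IH. Qed.

Lemma length_zbox n lo k : length (zbox n lo k) = (k ^ n)%nat.
Proof. by rewrite length_size size_map -cardE card_ffun !card_ord expn_pow. Qed.

Lemma In_zbox n lo k (z : zvec n) :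
  (forall i, lo <= z i < lo + Z.of_nat k)%Z -> In z (zbox n lo k).
Proof.
move=> z_box; apply/in_map_iff.
have lt_k i : (Z.to_nat (z i - lo) < k)%nat by apply/ltP; have := z_box i; lia.
exists [ffun i => Ordinal (lt_k i)]; split.
  by apply: functional_extensionality => i; rewrite ffunE /=; have := z_box i; lia.
by apply: In_of_mem; rewrite mem_enum.
Qed.

Lemma bounded_lattice_coord n (S : vec n -> Prop) M z i :
  (forall x, S x -> dist2 x (fun _ => 0) <= M) -> S (zembed z) ->
  (- up M <= z i <= up M)%Z.
Proof.
move=> S_bd Sz.
have zi2_le : (IZR (z i) - 0) * (IZR (z i) - 0) <= dist2 (zembed z) (fun _ => 0).
  by apply: (big_Rplus_ge_term (fun j => (zembed z j - 0) * (zembed z j - 0))) => j; nra.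
have [up_gt _] := archimed M; have d_le := S_bd _ Sz.
have zi_lt : (z i < up M + 1)%Z by apply: lt_IZR; rewrite plus_IZR; nra.
have zi_gt : (- up M - 1 < z i)%Z by apply: lt_IZR; rewrite minus_IZR opp_IZR; nra.
lia.
Qed.

Lemma bounded_lattice_cover n (S : vec n -> Prop) :
  is_bounded S -> exists B, forall z, S (zembed z) -> In z B.
Proof.
case=> M S_bd; exists (zbox n (- up M) (Z.to_nat (2 * up M + 1))) => z Sz.
by apply: In_zbox => i; have := @bounded_lattice_coord n S M z i S_bd Sz; lia.
Qed.

Lemma lattice_count_cover {n} {S : vec n -> Prop} {B : list (zvec n)} :
  (forall z, S (zembed z) -> In z B) -> exists m, lattice_count S m.
Proof.
move=> B_cover.
pose l := nodup (fun x y => excluded_middle_informative (x = y))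
  (List.filter (fun z => holds (S (zembed z))) B).
exists (length l), l; split; [exact: NoDup_nodup | split=> // z].
rewrite nodup_In filter_In; case: holdsP => Sz; split=> [[] // | Sz'].
- by split=> //; exact: B_cover.
- by case: (Sz Sz').
Qed.

Definition zzero {n} : zvec n := fun _ => 0%Z.
Definition zopp n (z : zvec n) : zvec n := fun i => (- z i)%Z.
Definition zpar n (z : zvec n) : zvec n := fun i => (z i mod 2)%Z.
Definition zhalf_diff n (x c : zvec n) : zvec n := fun i => ((x i - c i) / 2)%Z.

Lemma zpar0 n : zpar (@zzero n) = zzero.
Proof. by apply: functional_extensionality => i; exact: Zmod_0_l. Qed.

Lemma In_zpar_zbox n (z : zvec n) : In (zpar z) (zbox n 0 2).
Proof. by apply: In_zbox => i; have := Z.mod_pos_bound (z i) 2; rewrite /zpar; lia. Qed.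

Lemma zpar_eq_even n (x c : zvec n) i :
  zpar x = zpar c -> (x i - c i = 2 * ((x i - c i) / 2))%Z.
Proof.
move=> par_xc; apply/Z.div_exact => //.
have par_i : (x i mod 2 = c i mod 2)%Z := f_equal (fun g => g i) par_xc.
by rewrite Zminus_mod par_i Z.sub_diag.
Qed.

Lemma zembed_half_diff n (x c : zvec n) : zpar x = zpar c ->
  zembed (zhalf_diff x c) = vadd (vscale (1/2) (zembed x)) (vscale (1/2) (vopp (zembed c))).
Proof.
move=> par_xc; apply: functional_extensionality => i.
have even := zpar_eq_even i par_xc.
rewrite /zembed /zhalf_diff /vadd /vscale /vopp.
set w := ((x i - c i) / 2)%Z in even *.
have -> : x i = (2 * w + c i)%Z by lia.
by rewrite plus_IZR mult_IZR; lra.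
Qed.

Lemma zhalf_diff_inj n (x y c : zvec n) : zpar x = zpar c -> zpar y = zpar c ->
  zhalf_diff x c = zhalf_diff y c -> x = y.
Proof.
move=> par_xc par_yc eq_half; apply: functional_extensionality => i.
have := f_equal (fun g => g i) eq_half; rewrite /zhalf_diff.
by have := zpar_eq_even i par_xc; have := zpar_eq_even i par_yc; lia.
Qed.

Lemma parity_representatives n (S : zvec n -> Prop) : S zzero ->
  exists r : zvec n -> zvec n, r zzero = zzero /\
    forall x, S x -> S (r (zpar x)) /\ zpar (r (zpar x)) = zpar x.
Proof.
move=> S0.
exists (fun p => if holds (p = zzero) then zzero
                 else epsilon (inhabits zzero) (fun y => S y /\ zpar y = p)).
split=> [|x Sx] /=; first by case: holdsP.
case: holdsP => [par0 | _]; first by rewrite par0 zpar0.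
by apply: (epsilon_spec (inhabits zzero) (fun y => S y /\ zpar y = zpar x)); exists x.
Qed.

Section Encoding.
Variables (n : nat) (K : vec n -> Prop).
Hypotheses (Kbody : convex_body K) (Ksym : o_symmetric K) (Kstrict : strictly_convex K).

Section Representatives.
Variable r : zvec n -> zvec n.
Hypothesis r0 : r zzero = zzero.
Hypothesis r_spec : forall x, K (zembed x) ->
  K (zembed (r (zpar x))) /\ zpar (r (zpar x)) = zpar x.

Definition encode (x : zvec n) : zvec n * option (zvec n) :=
  let c := r (zpar x) in
  (zpar x, if holds (x = zopp c /\ x <> c) then None else Some (zhalf_diff x c)).

Lemma encode_neq0 x : encode x <> (zzero, None).
Proof.
rewrite /encode; case: holdsP => [[x_opp x_neq] | _] /= E; last by case: E.
case: E => par0; apply: x_neq; rewrite par0 r0 in x_opp *; rewrite x_opp.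
exact: functional_extensionality.
Qed.

Lemma encode_int x w : K (zembed x) -> (encode x).2 = Some w -> int_pts K (zembed w).
Proof.
move=> Kx; rewrite /encode /=; case: holdsP => // not_opp [<-].
have [Kc par_c] := r_spec Kx; set c := r (zpar x) in Kc par_c not_opp *.
have [x_c | x_neq] := excluded_middle_informative (x = c).
  have -> : zembed (zhalf_diff x c) = zembed zzero.
    by apply: functional_extensionality => i; rewrite /zembed /zhalf_diff x_c Z.sub_diag.
  exact: o_symmetric_int0.
rewrite zembed_half_diff //; case: Kbody => Kconv _.
apply: strictly_convex_midpoint => //; first by apply: (proj1 (Ksym _)).
move=> x_opp; apply: not_opp; split=> //; apply: functional_extensionality => i.
by have := f_equal (fun g => g i) x_opp; rewrite /zembed /vopp /zopp -opp_IZR; exact: eq_IZR.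
Qed.

Lemma encode_inj x y : K (zembed x) -> encode x = encode y -> x = y.
Proof.
move=> Kx; rewrite /encode => -[par_xy]; rewrite -par_xy.
have [_ par_x] := r_spec Kx; set c := r (zpar x) in par_x *.
case: holdsP => [[x_opp _] | _]; case: holdsP => [[y_opp _] | _] //; first by rewrite x_opp y_opp.
move=> [eq_half]; apply: (zhalf_diff_inj (esym par_x) _ eq_half).
by rewrite -par_xy par_x.
Qed.

End Representatives.

Lemma lattice_count_le gK gint :
  lattice_count K gK -> lattice_count (int_pts K) gint ->
  (gK <= 2 ^ n * (gint + 1) - 1)%nat.
Proof.
case=> lK [ndK [<- memK]]; case=> lI [_ [<- memI]].
have K0 : K (zembed zzero) := int_pts_in (o_symmetric_int0 Kbody Ksym).
have [r [r0 r_spec]] := parity_representatives (fun z => K (zembed z)) K0.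
pose Q := list_prod (zbox n 0 2) (None :: List.map Some lI).
have len_Q : length Q = (2 ^ n * (length lI).+1)%nat.
  by rewrite /Q length_prod length_zbox /= length_map.
suff : (length lK < length Q)%coq_nat by rewrite len_Q; lia.
apply: (@length_lt_of_inj_remove _ _ (fun a b => excluded_middle_informative (a = b))
  (encode r) lK Q (zzero, None) ndK).
- by move=> x y /memK Kx _; exact: encode_inj.
- move=> x /memK Kx; split; last exact: encode_neq0.
  apply: in_prod; first exact: In_zpar_zbox.
  case E: (encode r x).2 => [w|]; last by left.
  right; apply/in_map_iff; exists w; split=> //.
  by apply/memI; exact: (encode_int r r_spec Kx E).
- by apply: in_prod; [rewrite -(zpar0 n); exact: In_zpar_zbox | left].
Qed.

End Encoding.

Unset Implicit Arguments.

Theorem mainTheorem4 (n : nat) (K : vec n -> Prop) :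
  convex_body K -> o_symmetric K -> strictly_convex K ->
  exists gK gint : nat,
    lattice_count K gK /\ lattice_count (int_pts K) gint /\
    (gK <= 2 ^ n * (gint + 1) - 1)%nat.
Proof.
move=> Kbody Ksym Kstrict.
have [_ [_ [Kbounded _]]] := Kbody.
have [B B_cover] := bounded_lattice_cover Kbounded.
have [gK countK] := lattice_count_cover B_cover.
have [gint countI] := lattice_count_cover (fun z int_z => B_cover z (int_pts_in int_z)).
exists gK, gint; do 2!split=> //.
exact: lattice_count_le countK countI.
Qed.
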